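(* Let $a,b$ be positive integers and $r=[2a,2b,-2b,-2a]$. Then all zeros of $\Delta_{K(r)}(t)$ are real if and only if $a\ge 4b$.
   Context: For a finite sequence $r=[2a_1,2a_2,\dots,2a_n]$ of nonzero even integers, $K(r)$ denotes the 2-bridge knot or link whose associated rational number has the even continued fraction expansion $1/(2a_1-1/(2a_2-\cdots-1/(2a_n)))$ ($K(r)$ is a knot if $n$ is even and a 2-component link if $n$ is odd). Let $M(r)$ be the $n\times n$ integer matrix whose $(k,k)$-entry is $a_k$ ($1\le k\le n$), whose $(k,k+1)$-entry is $1$ ($1\le k\le n-1$), and whose other entries are $0$; it is a Seifert matrix of $K(r)$, and $\Delta_{K(r)}(t)=\det(tM(r)-M(r)^T)$ is the (reduced) Alexander polynomial of $K(r)$ (well defined up to sign). *)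

From HB Require Import structures.
From mathcomp Require Import all_boot all_order all_algebra all_field.
Set Implicit Arguments. Unset Strict Implicit. Unset Printing Implicit Defensive.
Import Order.TTheory GRing.Theory Num.Theory.
Local Open Scope ring_scope.

(* r = [2a_1; ...; 2a_n] : the sequence of (nonzero even) integers of the
   even continued fraction.  a_k = r_k / 2. *)
Definition half_entry (r : seq int) (k : nat) : int := ((r`_k) %/ 2)%Z.

Definition seifert_mx (r : seq int) : 'M[int]_(size r) :=
  \matrix_(i < size r, j < size r)
    (if (j == i :> nat) then half_entry r i
     else if (j == i.+1 :> nat) then 1 else 0).

Definition alexander (r : seq int) : {poly int} :=
  \det ('X *: map_mx polyC (seifert_mx r) - map_mx polyC (seifert_mx r)^T).

Definition all_zeros_real (p : {poly int}) : Prop :=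
  forall z : algC, root (map_poly intr p) z -> z \is Num.real.

From HB Require Import structures.
From mathcomp Require Import all_boot all_order all_algebra all_field.
From mathcomp Require Import ring zify.
Set Implicit Arguments. Unset Strict Implicit. Unset Printing Implicit Defensive.
Import Order.TTheory GRing.Theory Num.Theory.
Local Open Scope ring_scope.

(* For r = [2a, 2b, -2b, -2a] the Seifert matrix is tridiagonal, and expanding
   its 4 x 4 determinant gives the reciprocal quartic
       Delta(t) = A (t-1)^4 + B (t-1)^2 t + t^2,   A = (ab)^2,  B = 2ab - a^2.
   For t <> 0 the substitution u = (t-1)^2 / t turns Delta(t) = 0 into the
   quadratic A u^2 + B u + 1 = 0, and t is recovered from u as a root of the
   quadratic t^2 - (u+2) t + 1 = 0.  Everything then rests on one fact about
   quadratics with real coefficients: a root is real iff the discriminant is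
   nonnegative (quadratic_root_realE).  The quadratic in u has discriminant
   B^2 - 4A = a^3 (a - 4b), so:
   - if a < 4b, its roots u are non-real, and any t lying above such a u is a
     non-real zero of Delta (recip_quartic_nonreal_root);
   - if a >= 4b, then B < 0, the roots u are real and positive, so the second
     quadratic has discriminant u (u + 4) >= 0 and every zero t is real
     (recip_quartic_root_real). *)

Section Quadratic.
Variable R : comRingType.
Implicit Types a b c u x z : R.

Lemma quadratic_completed_square a b c x : a * x ^+ 2 + b * x + c = 0 ->
  (2 * a * x + b) ^+ 2 = b ^+ 2 - 4 * a * c.
Proof.
move=> root_x; apply/eqP; rewrite -subr_eq0; apply/eqP.
by rewrite -[RHS](mulr0 (4 * a)) -root_x; ring.
Qed.

Definition recip_quartic (A B z : R) : R :=
  A * (z - 1) ^+ 4 + B * (z - 1) ^+ 2 * z + z ^+ 2.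

Lemma recip_quarticE A B u z : (z - 1) ^+ 2 = u * z ->
  recip_quartic A B z = z ^+ 2 * (A * u ^+ 2 + B * u + 1).
Proof. by move=> zu; rewrite /recip_quartic -[4%N]/(2 * 2)%N exprM zu; ring. Qed.

Lemma recip_substitutionE u z :
  (z - 1) ^+ 2 = u * z <-> 1 * z ^+ 2 + - (u + 2) * z + 1 = 0.
Proof.
have -> : 1 * z ^+ 2 + - (u + 2) * z + 1 = (z - 1) ^+ 2 - u * z by ring.
by split=> [-> | /eqP]; [rewrite subrr | rewrite subr_eq0 => /eqP].
Qed.

End Quadratic.

Lemma real_quadratic_root_gt0 (R : numDomainType) (a b x : R) :
  x \is Num.real -> 0 <= a -> b <= 0 -> a * x ^+ 2 + b * x + 1 = 0 -> 0 < x.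
Proof.
move=> rx a_ge0 b_le0 root_x; rewrite real_ltNge ?rpred0 //; apply/negP => x_le0.
have lhs_ge0 : 0 <= a * x ^+ 2 + b * x.
  apply: addr_ge0; first by rewrite mulr_ge0 ?real_exprn_even_ge0.
  by rewrite mulr_le0.
by have := ltr_wpDl lhs_ge0 (@ltr01 R); rewrite root_x ltxx.
Qed.

(* A root of a quadratic with real coefficients is real exactly when the
   discriminant is nonnegative: 2 a x + b is a square root of it. *)
Lemma quadratic_root_realE (F : numFieldType) (a b c x : F) :
  a \is Num.real -> b \is Num.real -> a != 0 -> a * x ^+ 2 + b * x + c = 0 ->
  (x \is Num.real) = (0 <= b ^+ 2 - 4 * a * c).
Proof.
move=> ra rb a_neq0 /quadratic_completed_square <-; rewrite -realEsqr.
have a2_neq0 : 2 * a != 0 by rewrite mulf_neq0 ?pnatr_eq0.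
apply/idP/idP => [rx | rw]; first by rewrite rpredD ?rpredM ?rpred_nat.
have -> : x = (2 * a * x + b - b) / (2 * a) by rewrite addrK mulrAC divff ?mul1r.
by rewrite rpredM ?rpredB // realV rpredM ?rpred_nat.
Qed.

Section ClosedField.
Variable C : numClosedFieldType.
Implicit Types a b c A B z : C.

Lemma quadratic_has_root a b c : a != 0 -> exists x, a * x ^+ 2 + b * x + c = 0.
Proof.
move=> a_neq0; exists ((sqrtC (b ^+ 2 - 4 * a * c) - b) / (2 * a)).
have a2_neq0 : 2 * a != 0 by rewrite mulf_neq0 ?pnatr_eq0.
set s := sqrtC _; have s2 : s ^+ 2 = b ^+ 2 - 4 * a * c by exact: sqrtCK.
apply: (mulfI (mulf_neq0 a2_neq0 a2_neq0)); rewrite mulr0.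
have -> : 2 * a * (2 * a) * (a * ((s - b) / (2 * a)) ^+ 2 + b * ((s - b) / (2 * a)) + c)
    = a * (s ^+ 2 - (b ^+ 2 - 4 * a * c)) by field.
by rewrite s2 subrr mulr0.
Qed.

(* Pick a root u of
   the quadratic and a root z of z^2 - (u+2) z + 1; if z were real, so would
   be u = (z-1)^2 / z, forcing a nonnegative discriminant. *)
Lemma recip_quartic_nonreal_root A B : A \is Num.real -> B \is Num.real -> A != 0 ->
  B ^+ 2 - 4 * A < 0 -> exists z, recip_quartic A B z = 0 /\ z \notin Num.real.
Proof.
move=> rA rB A_neq0 discr_lt0; have [u root_u] := quadratic_has_root B 1 A_neq0.
have [z /recip_substitutionE zu] := quadratic_has_root (- (u + 2)) 1 (oner_neq0 C).
exists z; split; first by rewrite (recip_quarticE _ _ zu) root_u mulr0.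
apply/negP => rz.
have z_neq0 : z != 0.
  by apply: contra_eq_neq zu => ->; rewrite mulr0 sub0r sqrrN expr1n oner_eq0.
have ru : u \is Num.real.
  have -> : u = (z - 1) ^+ 2 / z by rewrite zu mulfK.
  by rewrite rpredM ?realV // rpredX // rpredB ?rpred1.
have := quadratic_root_realE rA rB A_neq0 root_u; rewrite ru mulr1 => /esym.
by rewrite (lt_geF discr_lt0).
Qed.

(* The associated u is a real positive root of the quadratic, so z solves
   z^2 - (u+2) z + 1 = 0 whose discriminant u (u + 4) is nonnegative. *)
Lemma recip_quartic_root_real A B z : 0 < A -> B < 0 -> 0 <= B ^+ 2 - 4 * A ->
  recip_quartic A B z = 0 -> z \is Num.real.
Proof.
move=> A_gt0 B_lt0 discr_ge0 root_z.
have rA : A \is Num.real by rewrite gtr0_real.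
have rB : B \is Num.real by rewrite ltr0_real.
have z_neq0 : z != 0.
  have quartic0 : recip_quartic A B 0 = A by rewrite /recip_quartic; ring.
  by apply: contra_eq_neq root_z => ->; rewrite quartic0 gt_eqF.
pose u := (z - 1) ^+ 2 / z.
have zu : (z - 1) ^+ 2 = u * z by rewrite divfK.
have root_u : A * u ^+ 2 + B * u + 1 = 0.
  by apply/(mulfI (expf_neq0 2 z_neq0)); rewrite -recip_quarticE // root_z mulr0.
have ru : u \is Num.real.
  by rewrite (quadratic_root_realE rA rB _ root_u) ?mulr1 ?gt_eqF.
have u_gt0 := real_quadratic_root_gt0 ru (ltW A_gt0) (ltW B_lt0) root_u.
move/recip_substitutionE: zu => root_z'.
rewrite (quadratic_root_realE _ _ (oner_neq0 C) root_z') ?(rpredN, rpredD, rpred1) //.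
have -> : (- (u + 2)) ^+ 2 - 4 * 1 * 1 = u * (u + 4) by ring.
by rewrite mulr_ge0 ?addr_ge0 ?ler0n ?ltW.
Qed.

End ClosedField.

Lemma det_tridiag4 (R : comRingType) (f : nat -> nat -> R) :
  f 0 2 = 0 -> f 0 3 = 0 -> f 1 3 = 0 -> f 2 0 = 0 -> f 3 0 = 0 -> f 3 1 = 0 ->
  \det (\matrix_(i < 4, j < 4) f i j) =
  f 3 3 * (f 2 2 * (f 0 0 * f 1 1 - f 0 1 * f 1 0) - f 1 2 * f 2 1 * f 0 0)
  - f 2 3 * f 3 2 * (f 0 0 * f 1 1 - f 0 1 * f 1 0).
Proof.
move=> f02 f03 f13 f20 f30 f31.
do 3!rewrite !(expand_det_row _ 0) !big_ord_recl !big_ord0 /cofactor.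
by rewrite !det_mx11 !mxE /bump /= f02 f03 f13 f20 f30 f31; ring.
Qed.

Lemma half_entry_double (s : seq int) k : half_entry [seq 2 * x | x <- s] k = s`_k.
Proof.
rewrite /half_entry; case: (ltnP k (size s)) => hk.
  by rewrite (nth_map 0) // mulKz.
by rewrite !nth_default ?size_map // div0z.
Qed.

Lemma alexanderE (a b : int) :
  alexander [:: 2 * a; 2 * b; - (2 * b); - (2 * a)] =
  ((a * b) ^+ 2)%:P * ('X - 1) ^+ 4 + (2 * a * b - a ^+ 2)%:P * ('X - 1) ^+ 2 * 'X
  + 'X ^+ 2.
Proof.
have -> : [:: 2 * a; 2 * b; - (2 * b); - (2 * a)] = [seq 2 * x | x <- [:: a; b; - b; - a]].
  by rewrite /= !mulrN.
pose m (i j : nat) : int :=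
  if j == i then [:: a; b; - b; - a]`_i else if j == i.+1 then 1 else 0.
have -> : alexander [seq 2 * x | x <- [:: a; b; - b; - a]] =
    \det (\matrix_(i < 4, j < 4) ('X * (m i j)%:P - (m j i)%:P)).
  by congr (\det _); apply/matrixP => i j; rewrite !mxE !half_entry_double mulrC.
rewrite (@det_tridiag4 _ (fun i j => 'X * (m i j)%:P - (m j i)%:P)) /m /=.
  by rewrite ?polyC0 ?polyCN ?polyC1 ?polyCM ?polyCX; ring.
all: by rewrite polyC0 mulr0 subr0.
Qed.

Lemma alexander_horner (C : numClosedFieldType) (a b : int) (z : C) :
  (map_poly intr (alexander [:: 2 * a; 2 * b; - (2 * b); - (2 * a)])).[z] =
  recip_quartic ((a * b) ^+ 2)%:~R (2 * a * b - a ^+ 2)%:~R z.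
Proof.
have hornerC_int c : (map_poly intr c%:P).[z] = c%:~R :> C.
  by rewrite map_polyC hornerC.
have hornerX_int : (map_poly (intr : int -> C) 'X).[z] = z.
  by rewrite map_polyX hornerX.
rewrite alexanderE !(rmorphD, rmorphN, rmorphB, rmorphM, rmorphXn, rmorph1).
by rewrite !(hornerD, hornerN, hornerM, horner_exp, hornerC) !hornerC_int !hornerX_int.
Qed.

Theorem proposition8p3 (a b : int) (ha : 0 < a) (hb : 0 < b) :
  all_zeros_real (alexander [:: 2 * a; 2 * b; - (2 * b); - (2 * a)]) <->
  4 * b <= a.
Proof.
pose A : int := (a * b) ^+ 2; pose B : int := 2 * a * b - a ^+ 2.
have A_gt0 : 0 < A by rewrite exprn_gt0 ?mulr_gt0.
have discrE : (B%:~R) ^+ 2 - 4 * A%:~R = (a ^+ 3 * (a - 4 * b))%:~R :> algC.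
  by rewrite /A /B !(rmorphB, rmorphM, rmorphXn, rmorph_nat) /=; ring.
have discr_ge0 : (0 <= a ^+ 3 * (a - 4 * b)) = (4 * b <= a).
  by rewrite pmulr_rge0 ?exprn_gt0 // subr_ge0.
split=> [all_real | le_4b_a z].
- rewrite -discr_ge0 leNgt; apply/negP => discr_lt0.
  have A_neq0 : A%:~R != 0 :> algC by rewrite intr_eq0 gt_eqF.
  have discrC_lt0 : (B%:~R) ^+ 2 - 4 * A%:~R < 0 :> algC by rewrite discrE ltrz0.
  have [z [root_z]] := recip_quartic_nonreal_root (realz _ A) (realz _ B) A_neq0 discrC_lt0.
  by rewrite all_real // /root alexander_horner root_z.
- rewrite /root alexander_horner => /eqP; apply: recip_quartic_root_real.
  + by rewrite ltr0z.
  + by rewrite ltrz0 /B; nia.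
  + by rewrite discrE ler0z discr_ge0.
Qed.
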